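(* Let $G$ be a connected graph having a matching bond with $m$ edges. Consider the generalized Broadcast setting in which initially there are $k_1\ge1$ ignorant agents and $k_2\ge1$ source agents (all holding $\mathcal M$), all on pairwise distinct nodes. If $k_1+k_2\le m-1$, then the adversary has a winning strategy, i.e. it can prevent forever any ignorant agent from obtaining $\mathcal M$.
   Context: A bond of a graph is a minimal edge cut: a set of edges whose removal disconnects the graph, but such that removing all but any one of its edges leaves the graph connected. A matching bond is a bond whose edges are pairwise vertex-disjoint. Broadcast model (with several initial sources): a connected base graph $G=(V,E)$. Some agents (source agents) hold a message $\mathcal M$, the others (ignorant agents) do not; initially all agents occupy pairwise distinct nodes, the initial placement being chosen by the adversary. Time proceeds in synchronous rounds; in each round: (1) the adversary removes a (possibly empty) set $E'\subseteq E$ of edges such that $(V,E\setminus E')$ is connected; (2) each agent (agents have unique IDs, local memory, and see the entire current graph, the positions of all agents and which agents hold $\mathcal M$) chooses either to stay or to traverse an edge of $E\setminus E'$ incident to its current node; (3) agents move. Whenever an ignorant agent is at the same node as an agent holding $\mathcal M$, it receives $\mathcal M$ and becomes a source agent. The adversary is adaptive and knows the agents' strategy. *)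

From mathcomp Require Import all_boot.
Set Implicit Arguments. Unset Strict Implicit. Unset Printing Implicit Defensive.

(* A finite simple graph on vertex type V is given by its edge set
   E : {set {set V}}, every edge being a 2-element set of vertices. *)
Definition simple_graph (V : finType) (E : {set {set V}}) : Prop :=
  forall e, e \in E -> #|e| = 2.

Definition edge_rel (V : finType) (E : {set {set V}}) : rel V :=
  fun x y => [set x; y] \in E.

Definition connected (V : finType) (E : {set {set V}}) : Prop :=
  forall x y : V, connect (edge_rel E) x y.

Definition is_bond (V : finType) (E F : {set {set V}}) : Prop :=
  [/\ F \subset E,
      ~ connected (E :\: F)
    & forall e, e \in F -> connected (E :\: (F :\ e))].

Definition matching_bond (V : finType) (E F : {set {set V}}) : Prop :=
  is_bond E F /\
  (forall e1 e2, e1 \in F -> e2 \in F -> e1 != e2 -> [disjoint e1 & e2]).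

(* A configuration of the n agents: positions and "holds M" flags. *)
Definition conf (V : finType) (n : nat) : Type :=
  ({ffun 'I_n -> V} * {ffun 'I_n -> bool})%type.

(* A (deterministic, history-dependent) joint strategy of the agents:
   given the history of past configurations together with the edge sets
   removed in those rounds, the current configuration and the set of
   edges removed in the current round, it gives for each agent the node
   it wants to go to (its current node = stay).  An illegal choice
   (a node not reachable through a present edge) is treated as "stay". *)
Definition strategy (V : finType) (n : nat) : Type :=
  seq (conf V n * {set {set V}}) -> conf V n -> {set {set V}} -> 'I_n -> V.

Definition step (V : finType) (n : nat) (E : {set {set V}})
    (tgt : 'I_n -> V) (Rt : {set {set V}}) (c : conf V n) : conf V n :=
  let pos' := [ffun a => if [set c.1 a; tgt a] \in E :\: Rt
                         then tgt a else c.1 a] in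
  (pos', [ffun a => c.2 a || [exists b, c.2 b && (pos' b == pos' a)]]).

Fixpoint run (V : finType) (n : nat) (E : {set {set V}})
    (strat : strategy V n) (R : nat -> {set {set V}}) (c0 : conf V n)
    (t : nat) : seq (conf V n * {set {set V}}) * conf V n :=
  match t with
  | 0 => ([::], c0)
  | t'.+1 =>
      let hc := run E strat R c0 t' in
      let tgt := strat hc.1 hc.2 (R t') in
      (rcons hc.1 (hc.2, R t'), step E tgt (R t') hc.2)
  end.

From mathcomp Require Import all_boot zify.
Set Implicit Arguments. Unset Strict Implicit. Unset Printing Implicit Defensive.

(* The bond F splits the vertices into a side S and its complement, every
   edge of F having one endpoint on each side; as F is a matching, each side
   has at least |F| > k1 + k2 vertices, so the ignorant agents can start in S
   and the sources outside it.  In every round the k1 + k2 agents touch at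
   most k1 + k2 of the disjoint edges of F, so some edge e of F carries no
   agent; the adversary removes F \ e, which keeps the graph connected by
   minimality of the bond.  The only edge left across the cut is then e,
   which no agent can traverse that round, so the two groups never meet. *)

Section Broadcast.
Variable V : finType.
Implicit Types (E F M N : {set {set V}}) (S A : {set V}) (e : {set V}).

Definition matching M :=
  forall e1 e2, e1 \in M -> e2 \in M -> e1 != e2 -> [disjoint e1 & e2].

Lemma matchingS M N : N \subset M -> matching M -> matching N.
Proof. by move=> /subsetP sNM mM e1 e2 /sNM e1M /sNM; apply: mM. Qed.

Lemma matching_card_le M A :
  matching M -> (forall e, e \in M -> e :&: A != set0) -> #|M| <= #|A|.
Proof.
move=> mM meetA.
pose edge_at z := odflt set0 [pick e in M | z \in e].
apply: leq_trans (leq_imset_card edge_at A).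
apply/subset_leq_card/subsetP => e eM.
have [z /setIP[ze zA]] := set0Pn _ (meetA e eM).
apply/imsetP; exists z => //; rewrite /edge_at.
case: pickP => [e' /andP[e'M ze']|/(_ e)]; last by rewrite eM ze.
have [// | ne] := eqVneq e e'.
by rewrite (disjointFr (mM _ _ eM e'M ne) ze) in ze'.
Qed.

Lemma matching_free_edge M n (pos : 'I_n -> V) :
  matching M -> n < #|M| -> exists2 e, e \in M & forall a, pos a \notin e.
Proof.
move=> mM ltnM.
pose touched := [set e in M | [exists a, pos a \in e]].
have card_touched : #|touched| <= n.
  apply: leq_trans (_ : #|[set pos a | a in 'I_n]| <= n); last first.
    by rewrite -[n in _ <= n]card_ord leq_imset_card.
  apply: matching_card_le => [|e].
    by apply: matchingS mM; apply/subsetP => e /setIdP[].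
  case/setIdP => _ /existsP[a pa]; apply/set0Pn; exists (pos a).
  by rewrite inE pa imset_f.
have /subsetPn[e eM etouched] : ~~ (M \subset touched).
  by apply: contraTN ltnM => /subset_leq_card; lia.
exists e => // a; apply: contra etouched => pa.
by rewrite inE eM; apply/existsP; exists a.
Qed.

Definition free_edge M n (pos : 'I_n -> V) :=
  odflt set0 [pick e in M | [forall a, pos a \notin e]].

Lemma free_edgeP M n (pos : 'I_n -> V) :
  matching M -> n < #|M| ->
  free_edge M pos \in M /\ forall a, pos a \notin free_edge M pos.
Proof.
move=> mM ltnM; rewrite /free_edge; case: pickP => [e /andP[eM /forallP]|] //.
have [e eM free] := matching_free_edge pos mM ltnM.
by move/(_ e); rewrite eM; move/negbT/forallPn => [a]; rewrite free.
Qed.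

Definition crosses S e := (e :&: S != set0) && (e :&: ~: S != set0).

Lemma edge_rel_sym E : symmetric (edge_rel E).
Proof. by move=> x y; rewrite /edge_rel setUC. Qed.

Lemma connected_closed E S x y :
  connected E -> closed (edge_rel E) S -> (x \in S) = (y \in S).
Proof. by move=> conn clS; apply: closed_connect clS _ _ (conn x y). Qed.

Lemma not_crosses_same_side S e x y :
  ~~ crosses S e -> x \in e -> y \in e -> (x \in S) = (y \in S).
Proof.
rewrite /crosses negb_and !negbK !setI_eq0 => /orP[] dis xe ye.
  by rewrite (disjointFr dis xe) (disjointFr dis ye).
move: (disjointFr dis xe) (disjointFr dis ye).
by rewrite !inE => /negbFE-> /negbFE->.
Qed.

Lemma closed_setD1 E F S e :
  closed (edge_rel (E :\: F)) S -> ~~ crosses S e ->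
  closed (edge_rel (E :\: (F :\ e))) S.
Proof.
move=> clS ncr x y; rewrite /edge_rel !inE negb_and negbK => /andP[xyF xyE].
have [xy_e | xyNF] := eqVneq [set x; y] e.
  by apply: not_crosses_same_side ncr _ _; rewrite -xy_e !inE eqxx ?orbT.
apply: clS; rewrite /edge_rel !inE xyE andbT.
by move: xyF; rewrite (negbTE xyNF).
Qed.

(* S is the component of x in E \ F, for some x, y it fails to connect;
   by minimality of the bond every edge of F then crosses S. *)
Lemma bond_side E F :
  is_bond E F ->
  exists2 S : {set V}, closed (edge_rel (E :\: F)) S
                     & forall e, e \in F -> crosses S e.
Proof.
case=> _ disconn min_bond.
have /existsP[x /existsP[y nxy]] :
    [exists x, exists y, ~~ connect (edge_rel (E :\: F)) x y].
  apply: contra_notT disconn => /existsPn all_conn x y.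
  by have /existsPn/(_ y) := all_conn x; rewrite negbK.
pose S := [set z | connect (edge_rel (E :\: F)) x z].
have clS : closed (edge_rel (E :\: F)) S.
  move=> z w zw; rewrite !inE.
  exact: (connect_closed (sym_connect_sym (edge_rel_sym _))).
exists S => // e eF; apply: contraNT nxy => ncr.
have := connected_closed x y (min_bond e eF) (closed_setD1 clS ncr).
by rewrite !inE connect0 => <-.
Qed.

Lemma sided_placement n (side : 'I_n -> bool) S :
  n <= #|S| -> n <= #|~: S| ->
  exists2 pos : {ffun 'I_n -> V}, injective pos
                                 & forall a, (pos a \in S) = side a.
Proof.
move=> leS leC.
pose pos := [ffun a => if side a then enum_val (widen_ord leS a)
                       else enum_val (widen_ord leC a)].
have posS a : (pos a \in S) = side a.
  rewrite ffunE; case: (side a); first exact: enum_valP.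
  by have := enum_valP (widen_ord leC a); rewrite inE => /negbTE.
exists pos => // a b eq_ab.
have eq_side : side a = side b by rewrite -!posS eq_ab.
move: eq_ab; rewrite !ffunE eq_side.
by case: (side b) => /enum_val_inj/(congr1 val) /= /val_inj.
Qed.

Definition sided S n (c : conf V n) := forall a, (c.1 a \in S) = ~~ c.2 a.

(* With only the edge e of F present, an agent crossing the cut would have
   to traverse e, which has no agent on its endpoints. *)
Lemma step_same_side E F S e n tgt (c : conf V n) :
  closed (edge_rel (E :\: F)) S -> (forall a, c.1 a \notin e) ->
  forall a, ((step E tgt (F :\ e) c).1 a \in S) = (c.1 a \in S).
Proof.
move=> clS free a; rewrite ffunE; case: ifPn => // moved; apply/esym/clS.
move: moved; rewrite /edge_rel !inE negb_and negbK => /andP[+ ->].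
case/orP => [/eqP eq_e | -> //].
by have := free a; rewrite -eq_e !inE eqxx.
Qed.

Lemma step_sided E Rt S n tgt (c : conf V n) :
  sided S c -> (forall a, ((step E tgt Rt c).1 a \in S) = (c.1 a \in S)) ->
  (step E tgt Rt c).2 = c.2 /\ sided S (step E tgt Rt c).
Proof.
move=> sc same.
have flags : (step E tgt Rt c).2 = c.2.
  apply/ffunP => a; rewrite ffunE; case ia: (c.2 a) => //=.
  apply/existsPn => b; apply/negP => /andP[ib /eqP eq_ba].
  by move: (same b) (same a); rewrite eq_ba !sc ia ib => ->.
by split=> // a; rewrite flags same.
Qed.

Lemma adaptive_removal E n (strat : strategy V n)
    (adv : conf V n -> {set {set V}}) (c0 : conf V n) :
  exists R : nat -> {set {set V}}, forall t, R t = adv (run E strat R c0 t).2.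
Proof.
pose fix play t := match t with
  | 0 => ([::], c0)
  | t'.+1 => let hc := play t' in
      (rcons hc.1 (hc.2, adv hc.2),
       step E (strat hc.1 hc.2 (adv hc.2)) (adv hc.2) hc.2)
  end.
exists (fun t => adv (play t).2).
suff runE t : run E strat (fun t => adv (play t).2) c0 t = play t.
  by move=> t; rewrite runE.
by elim: t => //= t ->.
Qed.

Lemma run_sided E F S n (strat : strategy V n) R (c0 : conf V n) :
  closed (edge_rel (E :\: F)) S -> matching F -> n < #|F| ->
  (forall t, R t = F :\ free_edge F (run E strat R c0 t).2.1) ->
  sided S c0 ->
  forall t, (run E strat R c0 t).2.2 = c0.2 /\ sided S (run E strat R c0 t).2.
Proof.
move=> clS mF ltnF RE sc0; elim=> [|t [flags sct]] //=.
have [_ free] := free_edgeP (run E strat R c0 t).2.1 mF ltnF.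
rewrite RE -flags; apply: step_sided sct _.
exact: step_same_side clS free.
Qed.

End Broadcast.

Theorem theorem7 (V : finType) (E F : {set {set V}}) (k1 k2 : nat) :
  simple_graph E -> connected E -> matching_bond E F ->
  1 <= k1 -> 1 <= k2 -> k1 + k2 <= #|F| - 1 ->
  forall (inf0 : {ffun 'I_(k1 + k2) -> bool}),
  #|[set a | inf0 a]| = k2 ->
  forall strat : strategy V (k1 + k2),
  exists pos0 : {ffun 'I_(k1 + k2) -> V}, injective pos0 /\
  exists R : nat -> {set {set V}},
    (forall t, R t \subset E /\ connected (E :\: R t)) /\
    (forall t a, ~~ inf0 a -> ~~ (run E strat R (pos0, inf0) t).2.2 a).
Proof.
move=> _ _ [bond mF] k1_gt0 _ ltnF inf0 _ strat.
have {}ltnF : k1 + k2 < #|F| by lia.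
have [S clS crossS] := bond_side bond.
have [sFE _ min_bond] := bond.
have leS : #|F| <= #|S|.
  by apply: matching_card_le mF _ => e /crossS /andP[].
have leC : #|F| <= #|~: S|.
  by apply: matching_card_le mF _ => e /crossS /andP[].
have [pos0 inj_pos0 sided0] :=
  sided_placement (fun a => ~~ inf0 a) (ltnW (leq_trans ltnF leS))
                  (ltnW (leq_trans ltnF leC)).
exists pos0; split => //.
have [R RE] := adaptive_removal E strat
  (fun c : conf V (k1 + k2) => F :\ free_edge F c.1) (pos0, inf0).
exists R; split => [t | t a ia].
  have [eF _] := free_edgeP (run E strat R (pos0, inf0) t).2.1 mF ltnF.
  rewrite RE; split; last exact: min_bond.
  exact: subset_trans (subD1set _ _) sFE.
by rewrite (proj1 (run_sided clS mF ltnF RE sided0 t)).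
Qed.
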